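(* Let $G_0$ be a finite nonabelian simple group, identified with its inner automorphism group in $\mathrm{Aut}(G_0)$. Suppose that $\mathrm{Reg}_H(H\cdot G_0,5)\ge 5$ for every maximal solvable subgroup $H$ of $\mathrm{Aut}(G_0)$. Then for every $G$ with $G_0\le G\le\mathrm{Aut}(G_0)$ and every solvable subgroup $S$ of $G$, we have $\mathrm{Reg}_S(G,5)\ge 5$.
   Context: For a finite group $G$ and subgroup $H$, $G$ acts by right multiplication on the set $\Omega_H$ of right cosets of $H$, with kernel $H_G=\bigcap_{g\in G}H^g$; $\mathrm{Reg}_H(G,k)$ is the number of regular (free) orbits of $G/H_G$ on $\Omega_H^k$ under the componentwise action $(\alpha_1,\dots,\alpha_k)g=(\alpha_1g,\dots,\alpha_kg)$. A maximal solvable subgroup is a solvable subgroup not properly contained in a solvable subgroup. $H\cdot G_0$ is the subgroup generated by $H$ and $G_0$. *)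

From mathcomp Require Import all_boot all_fingroup all_solvable.
Set Implicit Arguments. Unset Strict Implicit. Unset Printing Implicit Defensive.
Local Open Scope group_scope.

Definition Inn (gT : finGroupType) (G0 : {group gT}) : {group {perm gT}} :=
  (conj_aut G0 @* G0)%G.

Section Reg.
Variable T : finGroupType.

Definition tact k (t : {ffun 'I_k -> {set T}}) (g : T) : {ffun 'I_k -> {set T}} :=
  [ffun i => t i :* g].

Definition cosetTuples (H G : {set T}) k : {set {ffun 'I_k -> {set T}}} :=
  [set t : {ffun 'I_k -> {set T}} | [forall i : 'I_k, t i \in rcosets H G]].

Definition tstab (G : {set T}) k (t : {ffun 'I_k -> {set T}}) : {set T} :=
  [set g in G | tact t g == t].

Definition torbit (G : {set T}) k (t : {ffun 'I_k -> {set T}}) :=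
  [set tact t g | g in G].

(* Reg_H(G,k): number of G-orbits on Omega_H^k on which G/H_G acts regularly,
   i.e. whose point stabilisers in G equal the kernel H_G = gcore H G. *)
Definition Reg (H G : {set T}) k : nat :=
  #|[set torbit G t | t in cosetTuples H G k & tstab G t == gcore H G]|.
End Reg.

(* Let H be a maximal solvable subgroup of Aut G0 containing S.  A solvable subgroup of
   Aut G0 normalised by Inn G0 is trivial: it meets the simple nonsolvable group Inn G0
   trivially, hence centralises it, and C_{Aut G0}(Inn G0) = 1.  So S is core-free in G
   and H is core-free in L = H Inn G0.  Every right coset of H in L has the form H x with
   x in Inn G0 <= G, so a regular tuple (H x_i) lifts to (S x_i), whose stabiliser in G
   fixes (H x_i), hence lies in L and is trivial.  Projecting S-cosets to H-cosets sends
   G-orbits to L-orbits and hits every regular L-orbit, so Reg_H(L) <= Reg_S(G). *)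

From mathcomp Require Import all_boot all_fingroup all_solvable.
Local Open Scope group_scope.
Set Implicit Arguments. Unset Strict Implicit. Unset Printing Implicit Defensive.

Section InnerAutomorphisms.
Variables (gT : finGroupType) (G0 : {group gT}).

Lemma conj_aut_Aut a x : a \in Aut G0 -> x \in G0 ->
  conj_aut G0 x ^ a = conj_aut G0 (a x).
Proof.
move=> Aa Gx; apply/permP => z; rewrite conjgE !permM.
have [Gz | notGz] := boolP (z \in G0); last first.
  have Aai : a^-1 \in Aut G0 by rewrite groupV.
  by rewrite !(out_Aut _ notGz) ?Aut_aut.
have Gaiz : a^-1 z \in G0 by rewrite Aut_closed ?groupV.
by rewrite !conj_autE ?Aut_closed ?groupV // -{1}(autmE Aa) morphJ //= autmE permKV.
Qed.

Lemma Aut_norm_Inn : Aut G0 \subset 'N(Inn G0).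
Proof.
apply/subsetP => a Aa; rewrite inE; apply/subsetP => _ /imsetP[_ /morphimP[x _ Gx ->] ->].
have Gax : a x \in G0 by apply: Aut_closed.
by rewrite conj_aut_Aut // mem_morphim // (subsetP (normG G0)).
Qed.

Hypothesis Z1 : 'Z(G0) = 1.

Let innm := restrm (normG G0) (conj_aut G0).

Lemma injm_Inn : 'injm innm.
Proof. by rewrite ker_restrm ker_conj_aut -Z1. Qed.

Lemma isog_Inn : G0 \isog Inn G0.
Proof. by rewrite /= -(im_restrm (normG G0)) sub_isog ?injm_Inn. Qed.

Lemma Aut_cent_Inn : 'C_(Aut G0)(Inn G0) = 1.
Proof.
apply/trivgP/subsetP => a /setIP[Aa /centP cIa]; apply/set1P/permP => z.
have [Gz | notGz] := boolP (z \in G0); last by rewrite perm1 (out_Aut Aa).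
have Iz : conj_aut G0 z \in Inn G0 by rewrite mem_morphim ?(subsetP (normG G0)).
rewrite perm1; apply: (injmP injm_Inn); rewrite ?Aut_closed //.
change (conj_aut G0 (a z) = conj_aut G0 z).
by rewrite -conj_aut_Aut // conjgE -(cIa _ Iz) mulKg.
Qed.

End InnerAutomorphisms.

Section NonabelianSimple.
Variable gT : finGroupType.

Lemma simple_nonabelian_nsol (G : {group gT}) :
  simple G -> ~~ abelian G -> ~~ solvable G.
Proof.
move=> simG; apply: contra => solG.
exact/cyclic_abelian/prime_cyclic/simple_sol_prime.
Qed.

Lemma simple_nonabelian_center1 (G : {group gT}) :
  simple G -> ~~ abelian G -> 'Z(G) = 1.
Proof.
case/simpleP=> _ /(_ _ (center_normal G)) [//| ZG].
by move=> /negP[]; rewrite -ZG center_abelian.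
Qed.

Lemma simple_nsol_cent_sol (M N : {group gT}) :
    simple M -> ~~ solvable M -> solvable N ->
  M \subset 'N(N) -> N \subset 'N(M) -> N \subset 'C(M).
Proof.
move=> simM nsolM solN nNM nMN.
have nsNM : (N :&: M)%G <| M by rewrite /normal subsetIr normsI ?normG.
have NM1 : N :&: M = 1.
  case/simpleP: simM => _ /(_ _ nsNM) [//| NMM].
  by move: nsolM; rewrite -NMM (solvableS (subsetIl N M) solN).
apply/commG1P/trivgP; rewrite -NM1.
by apply: commg_subI; rewrite subsetI ?subxx ?nMN ?nNM.
Qed.

End NonabelianSimple.

Section AutSimple.
Variables (gT : finGroupType) (G0 : {group gT}).
Hypotheses (simG0 : simple G0) (nabG0 : ~~ abelian G0).

Lemma trivg_Aut_sol_normInn (N : {group {perm gT}}) :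
  N \subset Aut G0 -> solvable N -> Inn G0 \subset 'N(N) -> N :=: 1.
Proof.
move=> sNA solN nNI; apply/trivgP.
have Z1 := simple_nonabelian_center1 simG0 nabG0.
have isoI := isog_Inn Z1.
have cIN : N \subset 'C(Inn G0).
  apply: simple_nsol_cent_sol solN nNI (subset_trans sNA (Aut_norm_Inn G0)).
    by rewrite -(isog_simple isoI).
  by rewrite -(isog_sol isoI) simple_nonabelian_nsol.
by rewrite -(Aut_cent_Inn Z1) subsetI sNA.
Qed.

Lemma gcore_Aut_sol (S G : {group {perm gT}}) :
  S \subset Aut G0 -> solvable S -> Inn G0 \subset G -> gcore S G = 1.
Proof.
move=> sSA solS sIG; apply: trivg_Aut_sol_normInn.
- exact: subset_trans (gcore_sub S G) sSA.
- exact: solvableS (gcore_sub S G) solS.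
- exact: subset_trans sIG (gcore_norm S G).
Qed.

End AutSimple.

Section RegularOrbits.
Variable T : finGroupType.
Implicit Types (S H K G L : {group T}) (g : T) (k : nat).

Definition tproj (H : {set T}) k (t : {ffun 'I_k -> {set T}}) : {ffun 'I_k -> {set T}} :=
  [ffun i => H * t i].

Lemma tact1 k (t : {ffun 'I_k -> {set T}}) : tact t 1 = t.
Proof. by apply/ffunP => i; rewrite ffunE rcoset1. Qed.

Lemma tactM k (t : {ffun 'I_k -> {set T}}) g h : tact (tact t g) h = tact t (g * h).
Proof. by apply/ffunP => i; rewrite !ffunE rcosetM. Qed.

Lemma tproj_tact (H : {set T}) k (t : {ffun 'I_k -> {set T}}) g :
  tproj H (tact t g) = tact (tproj H t) g.
Proof. by apply/ffunP => i; rewrite !ffunE mulgA. Qed.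

Lemma torbit_tact L k (t : {ffun 'I_k -> {set T}}) g :
  g \in L -> torbit L (tact t g) = torbit L t.
Proof.
move=> Lg; apply/setP => u; apply/imsetP/imsetP => [[h Lh ->]|[h Lh ->]].
  by exists (g * h); rewrite ?groupM // tactM.
by exists (g^-1 * h); rewrite ?groupM ?groupV // tactM mulKVg.
Qed.

Lemma cosetTuplesS (H A B : {set T}) k :
  A \subset B -> cosetTuples H A k \subset cosetTuples H B k.
Proof.
move=> sAB; apply/subsetP => t; rewrite !inE => /forallP tA.
by apply/forallP => i; apply: subsetP (tA i); apply: imsetS.
Qed.

Lemma cosetTuples_tact_mem H L k (p : {ffun 'I_k.+1 -> {set T}}) g :
    H \subset L -> p \in cosetTuples H L k.+1 ->
  tact p g \in cosetTuples H L k.+1 -> g \in L.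
Proof.
move=> sHL; rewrite !inE => /forallP/(_ ord0)/imsetP[x Lx p0] /forallP/(_ ord0).
rewrite ffunE p0 rcosetE -rcosetM mem_rcosets mulSGid // => Lxg.
by rewrite -(mulKg x g) groupM ?groupV.
Qed.

Lemma cosetTuples_lift S H K k (p : {ffun 'I_k -> {set T}}) :
    S \subset H -> p \in cosetTuples H (H * K) k ->
  exists2 t, t \in cosetTuples S K k & tproj H t = p.
Proof.
move=> sSH; rewrite inE => /forallP pHK.
have /fin_all_exists2[x Kx px] i : exists2 x, x \in K & p i = H :* x.
  have /imsetP[_ /mulsgP[h y Hh Ky ->] ->] := pHK i.
  by exists y; rewrite // rcosetE rcosetM rcoset_id.
exists [ffun i => S :* x i].
  by rewrite inE; apply/forallP => i; rewrite ffunE -rcosetE imset_f.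
by apply/ffunP => i; rewrite !ffunE mulgA mulGSid.
Qed.

Lemma tstab_tproj H L G k (t : {ffun 'I_k.+1 -> {set T}}) :
    H \subset L -> tproj H t \in cosetTuples H L k.+1 ->
  tstab G t \subset tstab L (tproj H t).
Proof.
move=> sHL pHL; apply/subsetP => g; rewrite !inE => /andP[_ /eqP tg].
have pg : tact (tproj H t) g = tproj H t by rewrite -tproj_tact tg.
by rewrite pg eqxx (cosetTuples_tact_mem sHL pHL) ?pg.
Qed.

(* The union avoids choosing a representative of O; on the orbits that matter it is a
   single L-orbit (torbit_projE). *)
Definition torbit_proj H L k (O : {set {ffun 'I_k -> {set T}}}) :=
  \bigcup_(u in O | tproj H u \in cosetTuples H L k) torbit L (tproj H u).

Lemma torbit_projE H L G k (t : {ffun 'I_k.+1 -> {set T}}) :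
    H \subset L -> tproj H t \in cosetTuples H L k.+1 ->
  torbit_proj H L (torbit G t) = torbit L (tproj H t).
Proof.
move=> sHL pHL; apply/eqP; rewrite eqEsubset; apply/andP; split.
  apply/bigcupsP => _ /andP[/imsetP[g _ ->]].
  rewrite tproj_tact => /(cosetTuples_tact_mem sHL pHL) Lg.
  by rewrite torbit_tact.
by apply: (bigcup_sup t); rewrite pHL andbT; apply/imsetP; exists 1; rewrite ?tact1.
Qed.

Lemma Reg_joing_leq S H K G k :
    S \subset H -> K \subset G -> H \subset 'N(K) ->
    gcore H (H <*> K) = 1 -> gcore S G = 1 ->
  Reg H (H <*> K) k.+1 <= Reg S G k.+1.
Proof.
move=> sSH sKG nKH coreH coreS; set L := (H <*> K)%G.
have sHL : H \subset L := joing_subl H K.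
rewrite /Reg; apply: leq_trans (leq_imset_card (@torbit_proj H L k.+1) _).
apply/subset_leq_card/subsetP => _ /imsetP[p /setIdP[pHL /eqP pstab] ->].
have [t tSK tp] : exists2 t, t \in cosetTuples S K k.+1 & tproj H t = p.
  by apply: cosetTuples_lift; rewrite // -norm_joinEl.
apply/imsetP; exists (torbit G t); last by rewrite torbit_projE ?tp.
have stab1 : tstab G t \subset [1].
  by rewrite -coreH -pstab -tp; apply: tstab_tproj; rewrite // tp.
apply: imset_f; rewrite inE (subsetP (cosetTuplesS S k.+1 sKG)) //= coreS.
by rewrite eqEsubset stab1 sub1set !inE group1 tact1 eqxx.
Qed.

End RegularOrbits.

Theorem mainTheorem8 (gT : finGroupType) (G0 : {group gT}) :
  simple G0 -> ~~ abelian G0 ->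
  (forall H : {group {perm gT}},
      [max H of K | solvable K & K \subset Aut G0] ->
      5 <= Reg H (H <*> Inn G0) 5) ->
  forall G S : {group {perm gT}},
    Inn G0 \subset G -> G \subset Aut G0 ->
    S \subset G -> solvable S ->
    5 <= Reg S G 5.
Proof.
move=> simG0 nabG0 RegH G S sIG sGA sSG solS.
have sSA : S \subset Aut G0 := subset_trans sSG sGA.
have [H maxH sSH] := @maxgroup_exists _
  (fun K : {group {perm gT}} => solvable K && (K \subset Aut G0)) S
  (introT andP (conj solS sSA)).
have /andP[solH sHA] := maxgroupp maxH.
have nIH : H \subset 'N(Inn G0) := subset_trans sHA (Aut_norm_Inn G0).
have coreH := gcore_Aut_sol simG0 nabG0 sHA solH (joing_subr H (Inn G0)).
have coreS := gcore_Aut_sol simG0 nabG0 sSA solS sIG.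
exact: leq_trans (RegH H maxH) (Reg_joing_leq _ sSH sIG nIH coreH coreS).
Qed.
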